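(* Let $((f_t),(g_t),(h_t))$ be a $W_{1,+}$-geodesic on $G$ and let $\gamma$ be an oriented path of length $n\ge0$. Then $$\partial_t C_\gamma(t)=\sum_{x_0\in\mathcal{E}(\gamma_0)}C_{x_0\cup\gamma}(t)-\sum_{x_2\in\mathcal{F}(\gamma_n)}C_{\gamma\cup x_2}(t),$$ where $x_0\cup\gamma$ is the oriented path $x_0,\gamma_0,\dots,\gamma_n$ and $\gamma\cup x_2$ is $\gamma_0,\dots,\gamma_n,x_2$.
   Context: $G$ is a connected, locally finite graph with graph distance $d$; geodesics are paths of adjacent vertices $\gamma(0),\dots,\gamma(n)$ with $n=d(\gamma(0),\gamma(n))$, $e_0(\gamma)=\gamma(0)$, $e_1(\gamma)=\gamma(n)$. For finitely supported probability distributions $f_0,f_1$: $\Pi_1(f_0,f_1)$ = couplings minimizing $\sum d(x,y)\pi(x,y)$ (minimum $W_1(f_0,f_1)$), $\mathcal{C}(f_0,f_1)=\{(x,y):\pi(x,y)>0$ for some $\pi\in\Pi_1\}$; $W_1$-orientation: adjacent $x,y$ get $x\to y$ iff some geodesic $\gamma$ with $(e_0(\gamma),e_1(\gamma))\in\mathcal{C}(f_0,f_1)$ has $\gamma(k)=x,\gamma(k+1)=y$. Oriented paths have $\gamma(i)\to\gamma(i+1)$; write $\gamma_i=\gamma(i)$. $E(G)=\{(xy):x\to y\}$, $T(G)=\{(x_0x_1x_2):x_0\to x_1\to x_2\}$, $\mathcal{F}(x)=\{y:x\to y\}$, $\mathcal{E}(x)=\{y:y\to x\}$; $\nabla g(x_1)=\sum_{x_2\in\mathcal{F}(x_1)}g(x_1x_2)-\sum_{x_0\in\mathcal{E}(x_1)}g(x_0x_1)$,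 $\nabla h(x_1x_2)=\sum_{x_3\in\mathcal{F}(x_2)}h(x_1x_2x_3)-\sum_{x_0\in\mathcal{E}(x_1)}h(x_0x_1x_2)$. A $W_1$-geodesic: $W_1(f_s,f_t)=|t-s|W_1(f_0,f_1)$. A $W_{1,+}$-geodesic: a $W_1$-geodesic $(f_t)$ from $f_0$ to $f_1$ (graph with the $W_1$-orientation w.r.t. $(f_0,f_1)$), differentiable in $t$, with $g_t:E(G)\to\mathbb{R}$, $h_t:T(G)\to\mathbb{R}$ such that $\partial_tf_t=-\nabla g_t$, $\partial_tg_t=-\nabla h_t$, $g_t>0$ on $E(G)$, $f_t(x_1)h_t(x_0x_1x_2)=g_t(x_0x_1)g_t(x_1x_2)$ on $T(G)$. For an oriented path $\gamma$ of length $n$: $C_\gamma(t)=f_t(\gamma_0)$ if $n=0$; $C_\gamma(t)=g_t(\gamma_0\gamma_1)$ if $n=1$; $C_\gamma(t)=\prod_{i=0}^{n-1}g_t(\gamma_i\gamma_{i+1})/\prod_{j=1}^{n-1}f_t(\gamma_j)$ if $n\ge2$. *)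

From HB Require Import structures.
From mathcomp Require Import all_boot all_order all_algebra.
From mathcomp Require Import all_classical all_reals all_analysis.
Set Implicit Arguments. Unset Strict Implicit. Unset Printing Implicit Defensive.
Import Order.TTheory GRing.Theory Num.Theory.
Import numFieldNormedType.Exports.
Local Open Scope classical_set_scope.
Local Open Scope ring_scope.

Section Graph.
Variable V : choiceType.
Variable adj : rel V.

Definition simple_graph : Prop :=
  (forall x y, adj x y -> adj y x) /\ (forall x, ~~ adj x x).

Definition walk_len (x y : V) (n : nat) : Prop :=
  exists p : seq V, [/\ size p = n, path adj x p & last x p = y].

Definition connected_graph : Prop := forall x y, exists n, walk_len x y n.

Definition locally_finite : Prop := forall x, finite_set [set y | adj x y].

Definition gdist (x y : V) : nat :=
  xget 0%N [set n | walk_len x y n /\ forall m, walk_len x y m -> (n <= m)%N].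

(* geodesic gamma = x0 :: p, gamma(0) = x0, gamma(n) = last x0 p, n = size p *)
Definition geodesic (x0 : V) (p : seq V) : Prop :=
  path adj x0 p /\ size p = gdist x0 (last x0 p).

End Graph.

Section Transport.
Variable R : realType.
Variable V : choiceType.
Variable adj : rel V.

Definition supp (f : V -> R) : set V := [set x | f x != 0].

Definition fs_prob (f : V -> R) : Prop :=
  [/\ forall x, 0 <= f x, finite_set (supp f) & \sum_(x \in supp f) f x = 1].

Definition supp2 (pi : V -> V -> R) : set (V * V) :=
  [set q | pi q.1 q.2 != 0].

Definition coupling (f0 f1 : V -> R) (pi : V -> V -> R) : Prop :=
  [/\ forall x y, 0 <= pi x y, finite_set (supp2 pi),
      forall x, \sum_(y \in [set y | pi x y != 0]) pi x y = f0 x &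
      forall y, \sum_(x \in [set x | pi x y != 0]) pi x y = f1 y].

Definition cost (pi : V -> V -> R) : R :=
  \sum_(q \in supp2 pi) (gdist adj q.1 q.2)%:R * pi q.1 q.2.

Definition W1 (f0 f1 : V -> R) : R :=
  inf [set c | exists pi, coupling f0 f1 pi /\ c = cost pi].

Definition optimal_coupling (f0 f1 : V -> R) (pi : V -> V -> R) : Prop :=
  coupling f0 f1 pi /\ forall pi', coupling f0 f1 pi' -> cost pi <= cost pi'.

Definition Csupp (f0 f1 : V -> R) (x y : V) : Prop :=
  exists pi, optimal_coupling f0 f1 pi /\ 0 < pi x y.

Definition orient (f0 f1 : V -> R) (x y : V) : Prop :=
  adj x y /\
  exists (z0 : V) (p : seq V) (k : nat),
    [/\ geodesic adj z0 p, Csupp f0 f1 z0 (last z0 p), (k < size p)%N,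
        nth z0 (z0 :: p) k = x & nth z0 (z0 :: p) k.+1 = y].

End Transport.

Section Geodesic.
Variable R : realType.
Variable V : choiceType.
Variable adj : rel V.

(* derivative of F at t, for t in [0,1], taken within [0,1]
   (one-sided at the endpoints, ordinary derivative in the interior) *)
Definition deriv01 (F : R -> R) (t D : R) : Prop :=
  (fun e : R => e^-1 * (F (t + e) - F t))
    @ within [set e : R | e != 0 /\ 0 <= t + e <= 1] (nbhs (0 : R)) --> D.

Variable arrow : V -> V -> Prop.

Definition Fw (x : V) : set V := [set y | arrow x y].
Definition Ew (x : V) : set V := [set y | arrow y x].

Definition grad1 (g : V -> V -> R) (x1 : V) : R :=
  \sum_(x2 \in Fw x1) g x1 x2 - \sum_(x0 \in Ew x1) g x0 x1.

Definition grad2 (h : V -> V -> V -> R) (x1 x2 : V) : R :=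
  \sum_(x3 \in Fw x2) h x1 x2 x3 - \sum_(x0 \in Ew x1) h x0 x1 x2.

Definition oriented_path (x0 : V) (p : seq V) : Prop :=
  forall i, (i < size p)%N -> arrow (nth x0 (x0 :: p) i) (nth x0 (x0 :: p) i.+1).

Definition Cpath (f : R -> V -> R) (g : R -> V -> V -> R) (t : R)
    (x0 : V) (p : seq V) : R :=
  match p with
  | [::] => f t x0
  | [:: x1] => g t x0 x1
  | _ => (\prod_(i < size p) g t (nth x0 (x0 :: p) i) (nth x0 (x0 :: p) i.+1))
         / (\prod_(1 <= j < size p) f t (nth x0 (x0 :: p) j))
  end.

End Geodesic.

Definition W1_geodesic (R : realType) (V : choiceType) (adj : rel V)
    (f : R -> V -> R) : Prop :=
  (forall t, 0 <= t <= 1 -> fs_prob (f t)) /\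
  forall s t, 0 <= s <= 1 -> 0 <= t <= 1 ->
    W1 adj (f s) (f t) = `|t - s| * W1 adj (f 0) (f 1).

Definition W1plus_geodesic (R : realType) (V : choiceType) (adj : rel V)
    (f : R -> V -> R) (g : R -> V -> V -> R) (h : R -> V -> V -> V -> R) : Prop :=
  let arr := orient adj (f 0) (f 1) in
  [/\ W1_geodesic adj f,
      forall t x, 0 <= t <= 1 ->
        deriv01 (fun s => f s x) t (- grad1 arr (g t) x),
      forall t x1 x2, 0 <= t <= 1 -> arr x1 x2 ->
        deriv01 (fun s => g s x1 x2) t (- grad2 arr (h t) x1 x2),
      forall t x1 x2, 0 <= t <= 1 -> arr x1 x2 -> 0 < g t x1 x2 &
      forall t x0 x1 x2, 0 <= t <= 1 -> arr x0 x1 -> arr x1 x2 ->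
        f t x1 * h t x0 x1 x2 = g t x0 x1 * g t x1 x2].

From HB Require Import structures.
From mathcomp Require Import all_boot all_order all_algebra.
From mathcomp Require Import all_classical all_reals all_analysis.
From mathcomp Require Import ring.
Import Order.TTheory GRing.Theory Num.Theory.
Import numFieldNormedType.Exports.
Local Open Scope classical_set_scope.
Local Open Scope ring_scope.

(* Peeling off the first edge writes C_{x0 x1 ... xn} as g(x0 x1) / f(x1) times
   C_{x1 ... xn}, so the formula follows by induction on n from the product and
   quotient rules.  The relation f(x1) h(x0 x1 x2) = g(x0 x1) g(x1 x2) turns the
   transport equation for g into an equation in f and g only, and in the
   inductive step the contributions of the inner vertex x1 cancel. *)

Section Deriv01Calculus.
Set Implicit Arguments.
Variables (R : realType) (t : R).

Local Notation punctured :=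
  (within [set e : R | e != 0 /\ 0 <= t + e <= 1] (nbhs (0 : R))).

Lemma near_punctured_neq0 : \forall e \near punctured, e != 0.
Proof. by apply: filterS (near_withinT _ _) => // e []. Qed.

Lemma deriv01_cvg (F : R -> R) D :
  deriv01 F t D -> (fun e => F (t + e)) @ punctured --> F t.
Proof.
move=> dF.
have e_cvg0 : (fun e : R => e) @ punctured --> (0 : R).
  by apply: cvg_within_filter; exact: cvg_id.
have : (fun e => F t + e * (e^-1 * (F (t + e) - F t))) @ punctured --> F t + 0 * D.
  by apply: cvgD; [exact: cvg_cst | exact: cvgM e_cvg0 dF].
rewrite mul0r addr0; apply: cvg_trans; apply: near_eq_cvg.
near=> e; have e_neq0 : e != 0 by near: e; exact: near_punctured_neq0.
by rewrite mulrA mulfV // mul1r; ring.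
Unshelve. all: by end_near. Qed.

Lemma deriv01M (F G : R -> R) A B : deriv01 F t A -> deriv01 G t B ->
  deriv01 (fun s => F s * G s) t (A * G t + F t * B).
Proof.
move=> dF dG.
have : (fun e => e^-1 * (F (t + e) - F t) * G (t + e)
                 + F t * (e^-1 * (G (t + e) - G t))) @ punctured
       --> A * G t + F t * B.
  by apply: cvgD; [exact: cvgM dF (deriv01_cvg dG) | exact: cvgMl_tmp].
apply: cvg_trans; apply: near_eq_cvg; near=> e; ring.
Unshelve. all: by end_near. Qed.

Lemma deriv01V (F : R -> R) A : F t != 0 -> deriv01 F t A ->
  deriv01 (fun s => (F s)^-1) t (- A * (F t)^-1 * (F t)^-1).
Proof.
move=> Ft_neq0 dF; have F_cvg := deriv01_cvg dF.
have : (fun e => - (e^-1 * (F (t + e) - F t)) * (F (t + e))^-1 * (F t)^-1)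
       @ punctured --> - A * (F t)^-1 * (F t)^-1.
  by apply: cvgMr_tmp; apply: cvgM; [exact: cvgN | exact: cvgV Ft_neq0 F_cvg].
apply: cvg_trans; apply: near_eq_cvg; near=> e.
have Fte_neq0 : F (t + e) != 0 by near: e; exact: cvgr_neq0 F_cvg Ft_neq0.
have e_neq0 : e != 0 by near: e; exact: near_punctured_neq0.
by field; rewrite Ft_neq0 Fte_neq0 e_neq0.
Unshelve. all: by end_near. Qed.

End Deriv01Calculus.

Section PathWeights.
Set Implicit Arguments.
Variables (R : realType) (V : choiceType) (f : R -> V -> R) (g : R -> V -> V -> R).

Lemma Cpath_cons s y x p : p != [::] ->
  Cpath f g s y (x :: p) = g s y x / f s x * Cpath f g s x p.
Proof.
case: p => [//|x2 [|x3 q]] _.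
  by rewrite /Cpath /= !big_ord_recl big_ord0 big_nat1 /=; ring.
have nth_y_x (s' : seq V) i : (i < size s')%N -> nth y s' i = nth x s' i.
  exact: set_nth_default.
rewrite /Cpath /= big_ord_recl big_nat_recl // invfM /=.
under eq_bigr => i _ do
  rewrite add0n !nth_y_x ?(ltn_ord i) ?(ltn_trans (ltn_ord i)) //.
under eq_big_nat => j /andP [_ lt_j] do rewrite nth_y_x ?(ltn_trans lt_j) //.
ring.
Qed.

Lemma fsum_Cpath_cons s (A : set V) x p : p != [::] ->
  \sum_(y \in A) Cpath f g s y (x :: p)
  = (\sum_(y \in A) g s y x) / f s x * Cpath f g s x p.
Proof.
by move=> p_neq0; rewrite !mulr_fsuml; apply: eq_fsbigr => y _; rewrite Cpath_cons.
Qed.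

Lemma fsum_Cpath_rcons s (A : set V) x0 x1 p :
  \sum_(z \in A) Cpath f g s x0 (rcons (x1 :: p) z)
  = g s x0 x1 / f s x1 * \sum_(z \in A) Cpath f g s x1 (rcons p z).
Proof.
rewrite mulr_fsumr; apply: eq_fsbigr => z _.
by rewrite rcons_cons Cpath_cons // -size_eq0 size_rcons.
Qed.

End PathWeights.

Lemma oriented_path_cons (V : choiceType) (arr : V -> V -> Prop) x0 x1 p :
  oriented_path arr x0 (x1 :: p) -> arr x0 x1 /\ oriented_path arr x1 p.
Proof.
move=> arr_path; split; first exact: (arr_path 0%N).
move=> i lt_i; have := arr_path i.+1 lt_i; rewrite /= !(set_nth_default x1 x0) //.
exact: ltnW.
Qed.

Section W1plusAtTime.
Set Implicit Arguments.
Variables (R : realType) (V : choiceType) (arr : V -> V -> Prop).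
Variables (f : R -> V -> R) (g : R -> V -> V -> R) (h : R -> V -> V -> V -> R).
Variable t : R.
Hypothesis deriv_f : forall x, deriv01 (fun s => f s x) t (- grad1 arr (g t) x).
Hypothesis deriv_g : forall x1 x2, arr x1 x2 ->
  deriv01 (fun s => g s x1 x2) t (- grad2 arr (h t) x1 x2).
Hypothesis g_gt0 : forall x1 x2, arr x1 x2 -> 0 < g t x1 x2.
Hypothesis fh_gg : forall x0 x1 x2, arr x0 x1 -> arr x1 x2 ->
  f t x1 * h t x0 x1 x2 = g t x0 x1 * g t x1 x2.

Lemma f_inner_neq0 x0 x1 x2 : arr x0 x1 -> arr x1 x2 -> f t x1 != 0.
Proof.
move=> a01 a12; apply/eqP => f_eq0; move/eqP: (fh_gg a01 a12).
by rewrite f_eq0 mul0r eq_sym mulf_eq0 !gt_eqF ?g_gt0.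
Qed.

Lemma h_factor x0 x1 x2 : arr x0 x1 -> arr x1 x2 ->
  h t x0 x1 x2 = g t x0 x1 * g t x1 x2 / f t x1.
Proof.
move=> a01 a12; rewrite -(fh_gg a01 a12) mulrC mulrA mulVf ?mul1r //.
exact: f_inner_neq0 a01 a12.
Qed.

Lemma grad2_factor x0 x1 : arr x0 x1 ->
  grad2 arr (h t) x0 x1
  = g t x0 x1 * ((\sum_(x2 \in Fw arr x1) g t x1 x2) / f t x1
                 - (\sum_(y \in Ew arr x0) g t y x0) / f t x0).
Proof.
move=> a01; rewrite /grad2 mulrBr !mulrA !mulr_fsumr !mulr_fsuml.
congr (_ - _); apply: eq_fsbigr => z /set_mem arr_z; rewrite h_factor //; ring.
Qed.

Lemma deriv01_Cpath x0 p : oriented_path arr x0 p ->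
  deriv01 (fun s => Cpath f g s x0 p) t
    (\sum_(y \in Ew arr x0) Cpath f g t y (x0 :: p)
     - \sum_(z \in Fw arr (last x0 p)) Cpath f g t x0 (rcons p z)).
Proof.
elim: p x0 => [|x1 p IH] x0.
  by move=> _; apply: (eq_ind _ (deriv01 _ t) (deriv_f x0)); rewrite /grad1 opprB.
case/oriented_path_cons => a01; case: p IH => [|x2 q] IH.
  move=> _; apply: (eq_ind _ (deriv01 _ t) (deriv_g a01)).
  by rewrite fsum_Cpath_cons // fsum_Cpath_rcons grad2_factor //=; ring.
move=> path_x1; have [a12 _] := oriented_path_cons path_x1.
have f1_neq0 := f_inner_neq0 a01 a12.
have -> : (fun s => Cpath f g s x0 [:: x1, x2 & q])
          = (fun s => g s x0 x1 / f s x1 * Cpath f g s x1 (x2 :: q)).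
  by apply: funext => s; rewrite Cpath_cons.
apply: (eq_ind _ (deriv01 _ t)
  (deriv01M (deriv01M (deriv_g a01) (deriv01V f1_neq0 (deriv_f x1))) (IH _ path_x1))).
rewrite grad2_factor // /grad1 [last x0 _]/= !fsum_Cpath_cons //.
rewrite [Cpath _ _ _ x0 _]Cpath_cons // [in RHS]fsum_Cpath_rcons.
ring.
Qed.

End W1plusAtTime.

Theorem proposition3p2 (R : realType) (V : choiceType) (adj : rel V)
    (f : R -> V -> R) (g : R -> V -> V -> R) (h : R -> V -> V -> V -> R)
    (x0 : V) (p : seq V) :
  simple_graph adj -> connected_graph adj -> locally_finite adj ->
  W1plus_geodesic adj f g h ->
  oriented_path (orient adj (f 0) (f 1)) x0 p ->
  forall t : R, 0 <= t <= 1 ->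
    deriv01 (fun s => Cpath f g s x0 p) t
      (\sum_(y0 \in Ew (orient adj (f 0) (f 1)) x0) Cpath f g t y0 (x0 :: p)
       - \sum_(y2 \in Fw (orient adj (f 0) (f 1)) (last x0 p))
           Cpath f g t x0 (rcons p y2)).
Proof.
move=> _ _ _ [_ deriv_f deriv_g g_gt0 fh_gg] oriented t t01.
apply: deriv01_Cpath oriented.
- by move=> x; exact: deriv_f.
- by move=> x1 x2; exact: deriv_g.
- by move=> x1 x2; exact: g_gt0.
- by move=> x y z; exact: fh_gg.
Qed.
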